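(* Let $\mathcal{V}$ be a finite set of Boolean variables, let $B^{inv}(\mathcal{V}\cup\mathbf{X}\mathcal{V})$ be a pure Boolean expression over the atoms $p$ and $\mathbf{X}p$ ($p\in\mathcal{V}$), and let $B^{fair}(\mathcal{V})$ be a pure Boolean expression over $\mathcal{V}$. For $\phi^c=\mathbf{G}\,B^{inv}(\mathcal{V}\cup\mathbf{X}\mathcal{V})\wedge\mathbf{F}\mathbf{G}\,\neg B^{fair}(\mathcal{V})$ we have $\dim(L(\phi^c))=\dim\big(L(\mathbf{G}(B^{inv}\wedge\neg B^{fair}))\big)$.
   Context: Formulae are interpreted over $\omega$-words $w=w_1w_2\dots$ over $\Sigma=2^{\mathcal{V}}$; $L(\phi)$ is the set of $\omega$-words satisfying $\phi$. $w\models p$ iff $p\in w_1$, $w\models\mathbf{X}p$ iff $p\in w_2$; $w\models\mathbf{G}\psi$ iff every suffix $w^j=w_jw_{j+1}\dots$ satisfies $\psi$, and $w\models\mathbf{F}\psi$ iff some suffix $w^j$ satisfies $\psi$. Let $r=|\Sigma|$. For $L\subseteq\Sigma^\omega$, the $\alpha$-dimensional Hausdorff outer measure is $m_\alpha(L)=\lim_{n\to\infty}\inf_{V\in\mathcal{L}_n}\sum_{v\in V}r^{-\alpha|v|}$, where $\mathcal{L}_n$ is the collection of sets $V\subseteq\Sigma^*$ of words of length at least $n$ such that every word of $L$ has a prefix in $V$; the Hausdorff dimension $\dim(L)$ is the unique $\bar\alpha$ with $m_\alpha(L)=\infty$ for $\alpha<\bar\alpha$ and $m_\alpha(L)=0$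 for $\alpha>\bar\alpha$. *)

From HB Require Import structures.
From mathcomp Require Import all_boot all_order all_algebra.
From mathcomp Require Import all_classical all_reals all_analysis.
Set Implicit Arguments. Unset Strict Implicit. Unset Printing Implicit Defensive.
Import Order.TTheory GRing.Theory Num.Theory.
Local Open Scope classical_set_scope.
Local Open Scope ring_scope.

(* Alphabet Sigma = 2^V = {set V};  omega-words are maps nat -> {set V},
   indexed from 0 (w 0 is the paper's w_1). Finite words are seq {set V}. *)
Definition oword (V : finType) := nat -> {set V}.

Inductive bexp (A : Type) : Type :=
| BTrue : bexp A
| BFalse : bexp A
| BAtom : A -> bexp A
| BNot : bexp A -> bexp A
| BAnd : bexp A -> bexp A -> bexp A
| BOr : bexp A -> bexp A -> bexp A.

Fixpoint beval (A : Type) (val : A -> bool) (b : bexp A) : bool :=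
  match b with
  | BTrue => true
  | BFalse => false
  | BAtom a => val a
  | BNot b1 => ~~ beval val b1
  | BAnd b1 b2 => beval val b1 && beval val b2
  | BOr b1 b2 => beval val b1 || beval val b2
  end.

(* Atoms of B^inv: inl p stands for p, inr p stands for X p. *)
Definition inv_val (V : finType) (w : oword V) (j : nat) (a : V + V) : bool :=
  match a with
  | inl p => p \in w j
  | inr p => p \in w j.+1
  end.

Definition suffix (V : finType) (w : oword V) (j : nat) : oword V :=
  fun i => w (j + i)%N.

Definition sat_inv (V : finType) (Binv : bexp (V + V)) (w : oword V) : bool :=
  beval (inv_val w 0) Binv.
Definition sat_fair (V : finType) (Bfair : bexp V) (w : oword V) : bool :=
  beval (fun p => p \in w 0%N) Bfair.

Definition L_phic (V : finType) (Binv : bexp (V + V)) (Bfair : bexp V)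
  : set (oword V) :=
  [set w | (forall j, sat_inv Binv (suffix w j)) /\
           (exists i, forall k, ~~ sat_fair Bfair (suffix (suffix w i) k))].

Definition L_Ginvnfair (V : finType) (Binv : bexp (V + V)) (Bfair : bexp V)
  : set (oword V) :=
  [set w | forall j, sat_inv Binv (suffix w j) && ~~ sat_fair Bfair (suffix w j)].

Definition oprefix (V : finType) (w : oword V) (k : nat) : seq {set V} :=
  mkseq w k.

Definition covers (V : finType) (L : set (oword V)) (n : nat)
  : set (set (seq {set V})) :=
  [set C | (forall v, C v -> (n <= size v)%N) /\
           (forall w, L w -> exists k, C (oprefix w k))].

Definition alph_size (V : finType) : nat := #|{set V}|.

Section Hausdorff.
Variable R : realType.
Local Open Scope ereal_scope.

Definition hcover_inf (V : finType) (alpha : R) (L : set (oword V)) (n : nat)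
  : \bar R :=
  ereal_inf [set \esum_(v in C) ((alph_size V)%:R `^ (- alpha * (size v)%:R))%:E
            | C in covers L n].

Definition hmeasure (V : finType) (alpha : R) (L : set (oword V)) : \bar R :=
  limn (hcover_inf alpha L).

Definition hdim (V : finType) (L : set (oword V)) : \bar R :=
  ereal_inf [set alpha%:E | alpha in [set a : R | (0 <= a)%R /\ hmeasure a L = 0]].

End Hausdorff.

(* A word of L(phi^c) satisfies G B^inv everywhere and G ~B^fair from some
   position i on, so it is u w' with u a finite word and w' in
   L(G (B^inv /\ ~B^fair)); conversely the latter language is contained in
   L(phi^c).  Prepending a finite word u to the words of a cover can only
   decrease their weights r^(-alpha |v|), so if L(G (B^inv /\ ~B^fair)) has
   covers of arbitrarily small alpha-mass, choosing for each of the countably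
   many u a cover of mass eps 2^-(code u + 1) and prepending u yields a cover
   of L(phi^c) of mass at most eps.  The two languages thus have the same
   alpha-null sets for every alpha >= 0, hence the same dimension. *)
From Pilot Require Import Defs.
From mathcomp Require Import all_boot all_order all_algebra.
From mathcomp Require Import all_classical all_reals all_analysis.
Set Implicit Arguments. Unset Strict Implicit. Unset Printing Implicit Defensive.
Import Order.TTheory GRing.Theory Num.Theory.
Local Open Scope classical_set_scope.
Local Open Scope ring_scope.
Local Open Scope ereal_scope.

Lemma esum_subset_le (R : realType) (T : choiceType) (A B : set T)
    (a : T -> \bar R) :
  A `<=` B -> \esum_(i in A) a i <= \esum_(i in B) a i.
Proof.
move=> AB; apply: ge_ereal_sup => _ [X [finX XA] <-]; apply: ereal_sup_ubound.
by exists X => //; split => // x /XA/AB.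
Qed.

Lemma esum_image_le (R : realType) (T T' : choiceType) (t0 : T) (P : set T)
    (e : T -> T') (a : T' -> \bar R) :
  \esum_(j in e @` P) a j <= \esum_(i in P) a (e i).
Proof.
pose s (y : T') : T :=
  if pselect (exists x, P x /\ e x = y) is left h then projT1 (cid h) else t0.
have sK y : (e @` P) y -> P (s y) /\ e (s y) = y.
  move=> [x Px exy]; rewrite /s; case: pselect => [h|[]]; last by exists x.
  by case: (cid h).
have -> : e @` P = e @` (s @` (e @` P)).
  apply/seteqP; split => [y ePy|_ [_ [y ePy <-] <-]].
    by exists (s y); [exists y | case: (sK y ePy)].
  by exists (s y); case: (sK y ePy).
rewrite esum_image; last first.
  move=> _ _ /[!inE] -[y1 H1 <-] [y2 H2 <-].
  by have [_ ->] := sK y1 H1; have [_ ->] := sK y2 H2 => ->.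
by apply: esum_subset_le => _ [y ePy <-]; have [] := sK y ePy.
Qed.

Lemma esum_pickle_geometric_le (R : realType) (T : countType) (eps : R) :
  (0 <= eps)%R ->
  \esum_(u in [set: T]) (eps / (2 ^ (pickle u).+1)%:R)%:E <= eps%:E.
Proof.
move=> eps0.
rewrite -(esum_image _ pickle (fun i => (eps / (2 ^ i.+1)%:R)%:E)); last first.
  by move=> x y _ _; exact: (pcan_inj pickleK).
apply: le_trans (esum_subset_le _ (@subsetT _ _)) _.
rewrite -nneseries_esumT; last by move=> i; rewrite lee_fin divr_ge0.
exact: epsilon_trick0.
Qed.

Section Words.
Variable V : finType.
Implicit Types (w : oword V) (L : set (oword V)).

Lemma suffixD w i j : Defs.suffix (Defs.suffix w i) j = Defs.suffix w (i + j).
Proof. by apply: funext => x; rewrite /Defs.suffix addnA. Qed.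

Lemma oprefixD w i k :
  oprefix w (i + k) = oprefix w i ++ oprefix (Defs.suffix w i) k.
Proof.
rewrite /oprefix /mkseq iotaD map_cat add0n; congr (_ ++ _).
by rewrite -[i]addn0 iotaDl -map_comp addn0.
Qed.

Definition has_suffix_in L : set (oword V) :=
  [set w | exists i, L (Defs.suffix w i)].

Definition cat_cover (Cs : seq {set V} -> set (seq {set V}))
    : set (seq {set V}) :=
  [set uv.1 ++ uv.2 | uv in [set: seq {set V}] `*`` Cs].

Lemma covers_cat_cover L n Cs :
  (forall u, covers L n (Cs u)) -> covers (has_suffix_in L) n (cat_cover Cs).
Proof.
move=> LCs; split.
  move=> _ [[u v] [_ /= Csv] <-]; rewrite size_cat.
  by apply: leq_trans (leq_addl _ _); apply: (LCs u).1.
move=> w [i Lwi]; have [k Csk] := (LCs (oprefix w i)).2 _ Lwi.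
exists (i + k)%N; rewrite oprefixD.
by exists (oprefix w i, oprefix (Defs.suffix w i) k).
Qed.

Lemma alph_size_ge1 (R : realType) : (1 <= (alph_size V)%:R :> R)%R.
Proof. by rewrite ler1n; apply/card_gt0P; exists finset.set0. Qed.

End Words.

Section HausdorffMeasure.
Variables (R : realType) (V : finType) (a : R).
Implicit Types (L : set (oword V)) (C : set (seq {set V})).

Definition hweight (v : seq {set V}) : \bar R :=
  ((alph_size V)%:R `^ (- a * (size v)%:R))%:E.

Lemma hweight_ge0 v : 0 <= hweight v.
Proof. by rewrite lee_fin powR_ge0. Qed.

Lemma hweight_cat_le u v : (0 <= a)%R -> hweight (u ++ v) <= hweight v.
Proof.
move=> a0; rewrite lee_fin ler_powR ?alph_size_ge1 // size_cat natrD mulrDr.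
by rewrite gerDr mulNr oppr_le0 mulr_ge0.
Qed.

Lemma hcover_inf_ge0 L n : 0 <= hcover_inf a L n.
Proof.
apply: le_ereal_inf_tmp => _ [C _ <-]; apply: esum_ge0 => v _.
exact: hweight_ge0.
Qed.

Lemma le_hcover_inf L1 L2 n :
  L1 `<=` L2 -> hcover_inf a L1 n <= hcover_inf a L2 n.
Proof.
move=> L12; apply: le_ereal_inf_tmp => _ [C [sizeC L2C] <-].
by apply: ereal_inf_lbound; exists C => //; split => // w /L12/L2C.
Qed.

Lemma nondecreasing_hcover_inf L : nondecreasing_seq (hcover_inf a L).
Proof.
move=> n m nm; apply: le_ereal_inf_tmp => _ [C [sizeC LC] <-].
by apply: ereal_inf_lbound; exists C => //; split => // v /sizeC/(leq_trans nm).
Qed.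

Lemma hmeasure_eq0P L : hmeasure a L = 0 <-> forall n, hcover_inf a L n = 0.
Proof.
rewrite /hmeasure.
have /cvg_lim-> // := ereal_nondecreasing_cvgn (nondecreasing_hcover_inf L).
split => [L0 n|L0].
  apply: le_anti; rewrite hcover_inf_ge0 andbT -L0.
  by apply: ereal_sup_ubound; exists n.
apply: le_anti; rewrite (ereal_sup_ubound (_ : range _ 0)) ?andbT; last first.
  by exists 0%N => //; rewrite L0.
by apply: ge_ereal_sup => _ [n _ <-]; rewrite L0.
Qed.

Lemma hmeasure_eq0_subset L1 L2 :
  L1 `<=` L2 -> hmeasure a L2 = 0 -> hmeasure a L1 = 0.
Proof.
move=> L12 /hmeasure_eq0P L20; apply/hmeasure_eq0P => n.
by apply: le_anti; rewrite hcover_inf_ge0 andbT -(L20 n) le_hcover_inf.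
Qed.

Lemma esum_cat_cover_le Cs : (0 <= a)%R ->
  \esum_(v in cat_cover Cs) hweight v <=
  \esum_(u in [set: seq {set V}]) \esum_(v in Cs u) hweight v.
Proof.
move=> a0; rewrite esum_esum; last by move=> *; exact: hweight_ge0.
apply: le_trans (esum_image_le ([::], [::]) _ _ _) _.
by apply: le_esum => -[u v] _; exact: hweight_cat_le.
Qed.

Lemma hmeasure_has_suffix_in_eq0 L : (0 <= a)%R ->
  hmeasure a L = 0 -> hmeasure a (has_suffix_in L) = 0.
Proof.
move=> a0 /hmeasure_eq0P L0; apply/hmeasure_eq0P => n.
apply: le_anti; rewrite hcover_inf_ge0 andbT.
apply/lee_addgt0Pr => eps eps0; rewrite add0e.
pose d (u : seq {set V}) : R := (eps / (2 ^ (pickle u).+1)%:R)%R.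
have /choice[Cs LCs] : forall u, exists C,
    covers L n C /\ \esum_(v in C) hweight v < (d u)%:E.
  move=> u; have : hcover_inf a L n < (d u)%:E.
    by rewrite L0 lte_fin divr_gt0 // ltr0n expn_gt0.
  by case/ereal_inf_lt => _ [C LC <-]; exists C.
apply: (@le_trans _ _ (\esum_(v in cat_cover Cs) hweight v)).
  apply: ereal_inf_lbound; exists (cat_cover Cs) => //.
  exact: covers_cat_cover (fun u => (LCs u).1).
apply: le_trans (esum_cat_cover_le Cs a0) _.
apply: le_trans (esum_pickle_geometric_le (seq {set V}) (ltW eps0)).
by apply: le_esum => u _; exact: ltW (LCs u).2.
Qed.

End HausdorffMeasure.

Lemma hdim_sandwich (R : realType) (V : finType) (L1 L2 : set (oword V)) :
  L2 `<=` L1 -> L1 `<=` has_suffix_in L2 -> hdim R L1 = hdim R L2.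
Proof.
move=> L21 L12; rewrite /hdim; congr (ereal_inf (image _ _)).
apply: funext => a; apply: propext; split => -[a0 La0]; split => //.
  exact: hmeasure_eq0_subset La0.
exact/(hmeasure_eq0_subset L12)/hmeasure_has_suffix_in_eq0.
Qed.

Section Fairness.
Variables (V : finType) (Binv : bexp (V + V)) (Bfair : bexp V).

Lemma L_Ginvnfair_sub_phic : L_Ginvnfair Binv Bfair `<=` L_phic Binv Bfair.
Proof.
move=> w Lw; split; first by move=> j; case/andP: (Lw j).
by exists 0%N => k; rewrite suffixD add0n; case/andP: (Lw k).
Qed.

Lemma L_phic_sub_has_suffix_in :
  L_phic Binv Bfair `<=` has_suffix_in (L_Ginvnfair Binv Bfair).
Proof.
move=> w [inv [i fair]]; exists i => j.
by rewrite suffixD inv -suffixD fair.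
Qed.

End Fairness.

Theorem theorem5 (R : realType) (V : finType)
  (Binv : bexp (V + V)) (Bfair : bexp V) :
  hdim R (L_phic Binv Bfair) = hdim R (L_Ginvnfair Binv Bfair).
Proof.
apply: hdim_sandwich.
- exact: L_Ginvnfair_sub_phic.
- exact: L_phic_sub_has_suffix_in.
Qed.
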